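(* Let $\mathcal A=\{0,1\}$ and ${\bf u}\in\mathcal A^{\mathbb N}$. If the language of ${\bf u}$ is closed under reversal and $D({\bf u})>0$, then there exists a non-palindromic factor $q$ of ${\bf u}$ such that $0q0$, $0q1$, $1q0$ and $1q1$ are all factors of ${\bf u}$.
   Context: $\widetilde w$ is the reversal of $w$; $w$ is a palindrome if $w=\widetilde w$. The language is closed under reversal if the reversal of every factor is a factor. Palindromic defect: for a finite word $w$ of length $n$, $D(w)=n+1-$(number of distinct palindromic factors of $w$, including the empty word), and $D({\bf u})=\sup D(w)$ over factors $w$ of ${\bf u}$. *)

From mathcomp Require Import all_boot.
Set Implicit Arguments. Unset Strict Implicit. Unset Printing Implicit Defensive.

(* Alphabet A = {0,1} encoded as bool: 0 = false, 1 = true.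
   An infinite word u in A^N is a function nat -> bool. *)
Definition infword := nat -> bool.

Definition subword (u : infword) (i n : nat) : seq bool :=
  mkseq (fun k => u (i + k)) n.

Definition factor (u : infword) (w : seq bool) : Prop :=
  exists i, w = subword u i (size w).

Definition palindrome (w : seq bool) : bool := w == rev w.

Definition closed_under_reversal (u : infword) : Prop :=
  forall w, factor u w -> factor u (rev w).

Definition factors_of (w : seq bool) : seq (seq bool) :=
  undup ([:: [::]] ++ [seq take j (drop i w) | i <- iota 0 (size w), j <- iota 1 (size w - i)]).

Definition num_pal (w : seq bool) : nat := count palindrome (factors_of w).

Definition defect (w : seq bool) : nat := size w + 1 - num_pal w.

(* D(u) = sup over factors of D(w); D(u) > 0 iff some factor has positive defect *)
Definition defect_pos (u : infword) : Prop :=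
  exists w, factor u w /\ 0 < defect w.

Example ex_defect : defect [:: false; false; true; false; true; true; false; false] = 1.
Proof. by []. Qed.

(* If no prefix of a word had a longest palindromic suffix that also occurs earlier in
   it, every letter would contribute a new palindromic factor and the defect would vanish.
   So some factor f has a recurring longest palindromic suffix P, and the shortest suffix
   r of f that starts with P and is longer than P is a non-palindrome whose palindromic
   prefixes and suffixes are all borders.
   Such an r reads c q a s b q~ c with a <> b, and then q is not a palindrome. Hence c q a
   is a factor and, through the reversal of r, so is c q b. Let f' be r without its last
   letter. Either the longest palindromic suffix of f' recurs in f', and the argument
   restarts on a shorter word, or it begins with q b and is preceded by ~c in f': framed by
   a preceding c it would be a palindromic suffix of r, hence a prefix, forcing a = b. So
   ~c q b is a factor, and so is ~c q a by the same argument on the reversal of r. *)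

From mathcomp Require Import all_boot zify.

Set Implicit Arguments. Unset Strict Implicit. Unset Printing Implicit Defensive.

Section Words.
Variable T : eqType.
Implicit Types x y w : seq T.

Lemma prefix_of_prefixes x y w :
  prefix x w -> prefix y w -> size x <= size y -> prefix x y.
Proof.
rewrite !prefixE => /eqP Ex /eqP Ey le_xy.
by rewrite -Ey take_takel // Ex.
Qed.

Lemma suffix_of_suffixes x y w :
  suffix x w -> suffix y w -> size x <= size y -> suffix x y.
Proof. by rewrite /suffix -(size_rev x) -(size_rev y); apply: prefix_of_prefixes. Qed.

Lemma infix_rcons_ext x v (y : T) : infix x v -> exists z, infix (rcons x z) (rcons v y).
Proof.
case/infixP=> a [b ->]; exists (head y b); apply/infixP.
exists a, (behead (rcons b y)).
by case: b => [|z b]; rewrite !rcons_cat /= ?cats0 ?cats1 // cat_rcons.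
Qed.

Lemma cons_cat_nseq (c : T) q x y : c :: q ++ x = q ++ y -> q = nseq (size q) c.
Proof. by elim: q y => [|d q IH] y //= [<- /IH <-]. Qed.

Lemma nonpal_mismatch w : w != rev w ->
  exists p a s b, w = p ++ a :: s ++ b :: rev p /\ a != b.
Proof.
have [n] := ubnP (size w); elim: n w => // n IH [|x w] //.
case/lastP: w => [|m y] /= lt_n; first by rewrite eqxx.
have [<- | neq_xy] := eqVneq x y; last by exists [::], x, m, y; rewrite cats1.
rewrite rev_cons rev_rcons rcons_cons eqseq_cons eqseq_rcons !eqxx andbT /=.
move=> /(IH m); rewrite size_rcons in lt_n => /(_ (ltnW lt_n)) [p [a [s [b [-> ab]]]]].
by exists (x :: p), a, s, b; split=> //; rewrite rev_cons /= !(rcons_cat, rcons_cons).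
Qed.

Lemma rev_mismatch (c a b : T) q s :
  rev (rcons (c :: q ++ a :: s ++ b :: rev q) c) =
  rcons (c :: q ++ b :: rev s ++ a :: rev q) c.
Proof. by rewrite rev_rcons /= !(rev_cons, rev_cat, rcons_cat, revK) /= -!cats1 -!catA. Qed.

Lemma prefix_mismatch (c x a : T) q t :
  prefix (c :: rcons q x) (rcons (c :: q ++ a :: t) c) = (x == a).
Proof. by rewrite /= eqxx rcons_cat -cats1 prefix_catr //= eqxx prefix0s andbT. Qed.

End Words.

Lemma rev_pal (w : seq bool) : palindrome w -> rev w = w.
Proof. by move=> /eqP {2}->. Qed.

Lemma pal_suffixE (x w : seq bool) :
  palindrome x -> palindrome w -> suffix x w = prefix x w.
Proof. by move=> /rev_pal ex /rev_pal ew; rewrite -prefix_rev ex ew. Qed.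

Lemma subwordD u i m n : subword u i (m + n) = subword u i m ++ subword u (i + m) n.
Proof.
rewrite /subword /mkseq iotaD map_cat add0n -[m]addn0 iotaDl -map_comp.
by congr (_ ++ _); apply: eq_map => k /=; rewrite addn0 addnA.
Qed.

Lemma factor_infix u x w : infix x w -> factor u w -> factor u x.
Proof.
case/infixP=> a [b ->] [i]; rewrite !size_cat !subwordD.
move=> /eqP; rewrite !eqseq_cat ?size_mkseq // => /and3P [_ /eqP Ex _].
by exists (i + size a).
Qed.

Definition lps (f : seq bool) : seq bool :=
  drop (find palindrome (mkseq (drop^~ f) (size f))) f.

Lemma suffix_lps (f : seq bool) : suffix (lps f) f.
Proof. exact: suffix_drop. Qed.

Lemma palindrome_lps (f : seq bool) : palindrome (lps f).
Proof.
rewrite /lps; set s := mkseq _ _; have [lt_k | le_k] := ltnP (find palindrome s) (size f).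
  have := nth_find [::] (_ : has palindrome s); rewrite has_find size_mkseq.
  by rewrite nth_mkseq //; apply.
by rewrite drop_oversize.
Qed.

Lemma lps_longest (f x : seq bool) :
  suffix x f -> palindrome x -> size x <= size (lps f).
Proof.
move=> xf px; have le_xf : size x <= size f := size_suffix xf.
have [-> // | x_ne0] := eqVneq x [::].
have x_gt0 : 0 < size x by rewrite lt0n size_eq0.
rewrite size_drop.
suff : find palindrome (mkseq (drop^~ f) (size f)) <= size f - size x by lia.
rewrite leqNgt; apply/negP => /(before_find [::]).
have lt_xf : size f - size x < size f by lia.
by move: xf; rewrite suffixE nth_mkseq // => /eqP ->; rewrite px.
Qed.

(* [lps f] occurs in [f] other than as a suffix. If this fails for [f = rcons v y], then
   [lps f] is a palindromic factor of [f] that [v] lacks. *)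
Definition lps_recurs (f : seq bool) : bool := [exists z, infix (rcons (lps f) z) f].

Lemma lps_recursI (f t : seq bool) : t != [::] -> infix (lps f ++ t) f -> lps_recurs f.
Proof.
case: t => // y t _ yt; apply/existsP; exists y.
by apply: prefix_infix_trans yt; rewrite -cats1 prefix_catr //= !eqxx prefix0s.
Qed.

Lemma mem_factors_of (x w : seq bool) : (x \in factors_of w) = infix x w.
Proof.
rewrite mem_undup mem_cat inE; apply/idP/idP.
  case/orP=> [/eqP -> | /allpairsPdep [i [j [_ _ ->]]]]; first exact: infix0s.
  exact: infix_trans (infix_take _ _) (infix_drop _ _).
case/infixP=> a [b Ew]; case: x Ew => [|z x] Ew; first by rewrite eqxx.
apply/orP; right; apply/allpairsPdep; exists (size a), (size (z :: x)).
rewrite !mem_iota Ew !size_cat /=; split; [lia | lia |].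
by rewrite drop_size_cat // -cat_cons take_size_cat.
Qed.

Lemma num_pal_rcons (v : seq bool) y :
  ~~ infix (lps (rcons v y)) v -> num_pal v < num_pal (rcons v y).
Proof.
move=> fresh; rewrite /num_pal -!size_filter.
apply: (@uniq_leq_size _ (lps (rcons v y) :: _)).
  by rewrite /= mem_filter mem_factors_of (negbTE fresh) andbF filter_uniq ?undup_uniq.
move=> x; rewrite inE !mem_filter !mem_factors_of => /predU1P [-> | /andP [px xv]].
  by rewrite palindrome_lps suffixW ?suffix_lps.
by rewrite px (infix_trans xv) ?infix_rcons.
Qed.

Lemma defect_gt0_lps_recurs (w : seq bool) :
  0 < defect w -> exists2 f, prefix f w & lps_recurs f.
Proof.
elim/last_ind: w => [|v y IH] //.
have [recurs _ | fresh_lps] := boolP (lps_recurs (rcons v y)).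
  by exists (rcons v y) => //; apply: prefix_refl.
have fresh : ~~ infix (lps (rcons v y)) v.
  by apply: contra fresh_lps => /(infix_rcons_ext y) [z zf]; apply/existsP; exists z.
move=> pos; have [|f fv rf] := IH.
  by move: pos (num_pal_rcons fresh); rewrite /defect size_rcons; lia.
by exists f => //; apply: prefix_trans fv (prefix_rcons v y).
Qed.

Definition pal_border_closed (r : seq bool) :=
  (forall z : seq bool, suffix z r -> palindrome z -> prefix z r) /\
  (forall z : seq bool, prefix z r -> palindrome z -> suffix z r).

Lemma pal_border_closed_rev (r : seq bool) :
  pal_border_closed r -> pal_border_closed (rev r).
Proof.
case=> suff_pre pre_suff; split=> z zr pz; rewrite -(rev_pal pz).
  by rewrite prefix_rev pre_suff // -suffix_rev (rev_pal pz).
by rewrite suffix_rev suff_pre // -prefix_rev (rev_pal pz).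
Qed.

Section LpsReturn.
Variables f r : seq bool.
Hypotheses (r_suffix : suffix r f) (lps_prefix : prefix (lps f) r).
Hypothesis lps_lt : size (lps f) < size r.
Hypothesis r_shortest : forall r' : seq bool, suffix r' f -> prefix (lps f) r' ->
  size (lps f) < size r' -> size r <= size r'.

Lemma lps_suffix_return : suffix (lps f) r.
Proof. exact: suffix_of_suffixes (suffix_lps f) r_suffix (ltnW lps_lt). Qed.

Lemma return_nonpal : ~~ palindrome r.
Proof. by apply/negP => /(lps_longest r_suffix); rewrite leqNgt lps_lt. Qed.

Lemma return_pal_suffix (z : seq bool) : suffix z r -> palindrome z -> prefix z r.
Proof.
move=> zr pz; have zf := suffix_trans zr r_suffix.
have := suffix_of_suffixes zr lps_suffix_return (lps_longest zf pz).
by rewrite pal_suffixE ?palindrome_lps // => /prefix_trans; apply.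
Qed.

Lemma return_pal_prefix (z : seq bool) : prefix z r -> palindrome z -> suffix z r.
Proof.
move=> zr pz; have [le_z | lt_z] := leqP (size z) (size (lps f)).
  have := prefix_of_prefixes zr lps_prefix le_z.
  rewrite -pal_suffixE ?palindrome_lps // => /suffix_trans; apply.
  exact: lps_suffix_return.
have : suffix (lps f) z.
  by rewrite pal_suffixE ?palindrome_lps // (prefix_of_prefixes lps_prefix zr (ltnW lt_z)).
move=> /suffixP [z1 Ez]; have [t Er] : exists t : seq bool, r = z ++ t by apply/prefixP.
have [t0 | t_ne0] := eqVneq t [::].
  by move: return_nonpal; rewrite Er t0 cats0 pz.
have shorter : suffix (lps f ++ t) f.
  by apply: suffix_trans r_suffix; rewrite Er Ez -catA suffix_suffix.
have := r_shortest shorter (prefix_prefix _ _).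
rewrite size_cat -{1}[size (lps f)]addn0 ltn_add2l lt0n size_eq0 t_ne0 => /(_ isT).
by move: lt_z; rewrite Er Ez !size_cat; lia.
Qed.
End LpsReturn.

Lemma lps_recurs_return (f : seq bool) : lps_recurs f ->
  exists2 r, suffix r f & ~~ palindrome r /\ pal_border_closed r.
Proof.
case/existsP=> y /infixP [a [b Ef]].
pose returns n :=
  [&& size (lps f) < n, n <= size f & prefix (lps f) (drop (size f - n) f)].
have [|n /and3P [lt_n le_n pre] shortest] := ex_minnP (_ : exists n, returns n).
  have size_f : size f = size a + (size (lps f)).+1 + size b.
    by rewrite {1}Ef !size_cat size_rcons addnA.
  exists (size f - size a); apply/and3P; split; [lia | exact: leq_subr |].
  rewrite subKn; last by rewrite size_f -addnA leq_addr.
  by rewrite [X in drop _ X]Ef drop_size_cat // -cats1 -catA prefix_prefix.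
set r := drop (size f - n) f.
have size_r : size r = n by rewrite size_drop; lia.
have r_suffix : suffix r f := suffix_drop f (size f - n).
rewrite -size_r in lt_n.
have r_shortest (r' : seq bool) : suffix r' f -> prefix (lps f) r' ->
    size (lps f) < size r' -> size r <= size r'.
  move=> r'f pre' lt'; rewrite size_r shortest //; apply/and3P; split=> //.
    exact: size_suffix r'f.
  by move: r'f; rewrite suffixE => /eqP ->.
exists r => //; split; first exact: return_nonpal r_suffix lt_n.
split=> z zr pz; first exact (return_pal_suffix r_suffix pre lt_n zr pz).
exact (return_pal_prefix r_suffix pre lt_n r_shortest zr pz).
Qed.

Lemma pal_border_closed_mismatch (r : seq bool) : ~~ palindrome r -> pal_border_closed r ->
  exists c a b q s, r = rcons (c :: q ++ a :: s ++ b :: rev q) c /\ a != b.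
Proof.
move=> /nonpal_mismatch [[|c q] [a [s [b [Er ab]]]]] [suff_pre _].
  have := suff_pre [:: b]; rewrite Er /= -cat_cons suffix_suffix /palindrome /= eqxx.
  by move=> /(_ isT isT) /andP [/eqP ba _]; rewrite ba eqxx in ab.
exists c, a, b, q, s; split=> //.
by rewrite Er rev_cons /= !(rcons_cat, rcons_cons).
Qed.

Lemma mismatch_pal_eq (c a b : bool) q s :
  pal_border_closed (rcons (c :: q ++ a :: s ++ b :: rev q) c) ->
  palindrome q -> c = a -> c = b.
Proof.
move=> [_ pre_suff] /rev_pal rq ca.
have pal : palindrome (c :: rcons q c) by rewrite /palindrome rev_cons rev_rcons rq.
have := pre_suff _ _ pal; rewrite prefix_mismatch -ca eqxx => /(_ isT).
by rewrite -prefix_rev rev_mismatch (rev_pal pal) prefix_mismatch => /eqP.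
Qed.

Lemma mismatch_nonpal (c a b : bool) q s : a != b ->
  pal_border_closed (rcons (c :: q ++ a :: s ++ b :: rev q) c) -> ~~ palindrome q.
Proof.
move=> ab bc; apply/negP => pq.
have bc' := pal_border_closed_rev bc; rewrite rev_mismatch in bc'.
have [ca | cb] : c = a \/ c = b by move: ab; case: (a); case: (b); case: (c); auto.
  by move/eqP: ab; apply; rewrite -ca; apply: mismatch_pal_eq bc pq ca.
by move/eqP: ab; apply; rewrite -cb; apply/esym/(mismatch_pal_eq bc' pq cb).
Qed.

Lemma mismatch_lps_long (c a b : bool) q s f : f = c :: q ++ a :: s ++ b :: rev q ->
  ~~ lps_recurs f -> size q < size (lps f).
Proof.
move=> Ef; apply: contraNT; rewrite -leqNgt => le_lq.
have qf : suffix (rev q) f.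
  by apply/suffixP; exists (c :: q ++ a :: s ++ [:: b]); rewrite Ef /= -catA /= -catA.
have : suffix (lps f) (rev q) by apply: suffix_of_suffixes qf _; rewrite ?suffix_lps ?size_rev.
rewrite -prefix_revLR rev_pal ?palindrome_lps // => /prefixP [q' Eq].
apply: (@lps_recursI _ (q' ++ a :: s ++ b :: rev q)); first by case: q' {Eq}.
by rewrite [X in infix _ X]Ef [X in c :: X ++ _]Eq -catA infix_cons.
Qed.

Lemma mismatch_flip (c a b : bool) q s f : f = c :: q ++ a :: s ++ b :: rev q ->
  a != b -> ~~ palindrome q -> pal_border_closed (rcons f c) -> ~~ lps_recurs f ->
  infix (~~ c :: rcons q b) (rcons f c).
Proof.
move=> Ef ab npq [suff_pre _] nrec; have lt_q := mismatch_lps_long Ef nrec.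
have bqP : suffix (b :: rev q) (lps f).
  apply: suffix_of_suffixes (suffix_lps f) _; last by rewrite /= size_rev.
  by apply/suffixP; exists (c :: q ++ a :: s); rewrite Ef /= -catA.
have [t Et] : exists t, lps f = q ++ b :: t.
  move: bqP; rewrite /suffix (rev_pal (palindrome_lps f)) rev_cons revK.
  by case/prefixP=> t ->; exists t; rewrite -cats1 -catA.
have [x Ex] : exists x, f = x ++ lps f by apply/suffixP; apply: suffix_lps.
case/lastP: x Ex => [|x d] Ex.
  have Eq := cons_cat_nseq (etrans (esym Ef) (etrans Ex Et)).
  by move: npq; rewrite Eq /palindrome rev_nseq eqxx.
have Erf : rcons f c = x ++ d :: rcons (lps f) c by rewrite {1}Ex rcons_cat cat_rcons.
have [dc | /negPf dNc] := eqVneq d c.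
  have pal : palindrome (c :: rcons (lps f) c).
    by rewrite /palindrome rev_cons rev_rcons (rev_pal (palindrome_lps f)).
  have pre_r : prefix (c :: rcons (lps f) c) (rcons f c).
    by apply: suff_pre pal; rewrite Erf dc suffix_suffix.
  have : prefix (c :: rcons q b) (rcons f c).
    by apply: prefix_trans pre_r; rewrite Et -rcons_cons prefix_mismatch.
  by rewrite Ef prefix_mismatch => /eqP ba; rewrite ba eqxx in ab.
have -> : ~~ c = d by case: (c) (d) dNc => [] [].
rewrite Erf; apply: infix_catl; apply: prefixW.
by rewrite Et rcons_cat -cats1 /= eqxx prefix_catr //= !eqxx prefix0s.
Qed.

Lemma mismatch_flip_or_descend (c a b : bool) q s (r : seq bool) :
  r = rcons (c :: q ++ a :: s ++ b :: rev q) c -> a != b -> pal_border_closed r ->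
  infix (~~ c :: rcons q b) r \/
  exists2 r', size r' < size r & [/\ infix r' r, ~~ palindrome r' & pal_border_closed r'].
Proof.
move=> Er ab bcr.
have [recurs | fresh] := boolP (lps_recurs (c :: q ++ a :: s ++ b :: rev q)).
  right; have [r' r'f [npr' bcr']] := lps_recurs_return recurs.
  exists r'; first by rewrite Er size_rcons ltnS size_suffix.
  by split=> //; rewrite Er; apply: suffix_infix_trans r'f (prefixW (prefix_rcons _ _)).
have bc : pal_border_closed (rcons (c :: q ++ a :: s ++ b :: rev q) c) by rewrite -Er.
by left; rewrite Er; apply: mismatch_flip erefl ab (mismatch_nonpal ab bc) bc fresh.
Qed.

Definition strong_bispecial (u : infword) (q : seq bool) :=
  forall x y : bool, factor u (x :: rcons q y).

Lemma strong_bispecialI u (c a b : bool) q : a != b ->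
  factor u (c :: rcons q a) -> factor u (c :: rcons q b) ->
  factor u (~~ c :: rcons q a) -> factor u (~~ c :: rcons q b) -> strong_bispecial u q.
Proof. by move=> + + + + + x y; case: x y c a b => [] [] [] [] []. Qed.

Lemma pal_border_closed_strong_bispecial u (r : seq bool) : closed_under_reversal u ->
  factor u r -> ~~ palindrome r -> pal_border_closed r ->
  exists2 q, ~~ palindrome q & strong_bispecial u q.
Proof.
move=> u_rev; have [n] := ubnP (size r); elim: n r => // n IH r.
rewrite ltnS => le_rn ur npr bcr.
have [c [a [b [q [s [Er ab]]]]]] := pal_border_closed_mismatch npr bcr.
have Erev : rev r = rcons (c :: q ++ b :: rev s ++ a :: rev q) c by rewrite Er rev_mismatch.
have urev : factor u (rev r) := u_rev _ ur.
have [flip_r | [r' lt_r' [r'r npr' bcr']]] := mismatch_flip_or_descend Er ab bcr; last first.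
  exact: IH (leq_trans lt_r' le_rn) (factor_infix r'r ur) npr' bcr'.
have ba : b != a by rewrite eq_sym.
have [flip_rev | [r' lt_r' [r'r npr' bcr']]] :=
  mismatch_flip_or_descend Erev ba (pal_border_closed_rev bcr); last first.
  rewrite size_rev in lt_r'.
  exact: IH (leq_trans lt_r' le_rn) (factor_infix r'r urev) npr' bcr'.
have npq : ~~ palindrome q by apply: (@mismatch_nonpal c a b q s ab); rewrite -Er.
exists q => //.
apply: (@strong_bispecialI u c a b q ab).
- by apply: factor_infix ur; apply: prefixW; rewrite Er prefix_mismatch.
- by apply: factor_infix urev; apply: prefixW; rewrite Erev prefix_mismatch.
- exact: factor_infix flip_rev urev.
- exact: factor_infix flip_r ur.
Qed.

Theorem lemma23 (u : infword) :
  closed_under_reversal u -> defect_pos u ->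
  exists q : seq bool, factor u q /\ ~~ palindrome q /\
    factor u (false :: rcons q false) /\ factor u (false :: rcons q true) /\
    factor u (true :: rcons q false) /\ factor u (true :: rcons q true).
Proof.
move=> u_rev [w [uw pos]].
have [f fw recurs] := defect_gt0_lps_recurs pos.
have [r rf [npr bcr]] := lps_recurs_return recurs.
have ur : factor u r := factor_infix (suffix_infix_trans rf (prefixW fw)) uw.
have [q npq bq] := pal_border_closed_strong_bispecial u_rev ur npr bcr.
exists q; split.
  apply: factor_infix (bq false false).
  exact: infix_trans (infix_rcons q false) (infix_cons _ _).
split=> //; do 3 (split; first exact: bq); exact: bq.
Qed.
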